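(* Let $(r_I)_I$ be a family of idempotent functions $r_I:[0,1]^I\times[0,1]\to[0,1]^I\times[0,1]$ (one for each finite set of names $I$) satisfying (1) $r_I(u,z)=(u,z)$ iff $\partial_I u=1$ or $z=0$, and (2) $r_J(f\times\mathrm{id})r_I=r_J(f\times\mathrm{id})$ for every strict $f\in\mathrm{Hom}(I,J)$. Then there is a unique family of functions $r_\psi:[0,1]^I\times[0,1]\to[0,1]^I\times[0,1]$, indexed by finite sets of names $I$ and $\psi\in\mathbb{F}(I)$, such that: (a) $r_\psi=\mathrm{id}$ if $\psi=1_\mathbb{F}$; (b) $r_\psi=r_\psi\circ r_I$ if $\psi\neq 1_\mathbb{F}$; (c) $r_\psi(u,z)=(u,z)$ if $z=0$; (d) $r_\psi\circ((ib)\times\mathrm{id})=((ib)\times\mathrm{id})\circ r_{\psi(ib)}$ for all $i\in I$, $b\in\{0,1\}$. Moreover each $r_\psi$ is idempotent and its fixed points are exactly the $(u,z)$ with $\psi u=1$ or $z=0$.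
   Context: Fix a countably infinite set of names. $\mathsf{dM}(J)$ is the free de Morgan algebra on $J$. The cube category $\mathcal{C}$ has finite sets of names as objects; $f\in\mathrm{Hom}(I,J)$ is a map $J\to\mathsf{dM}(I)$, composed by substitution; $f$ is strict if it never takes value $0$ or $1$. Using the de Morgan algebra $([0,1],\min,\max,1-x)$, $f\in\mathrm{Hom}(I,J)$ induces $f:[0,1]^I\to[0,1]^J$, $(fu)_j=f(j)$ evaluated at $u$. For $i\in I$ and $b\in\{0,1\}$, the face map $(ib)\in\mathrm{Hom}(I-\{i\},I)$ sends $i\mapsto b$ and $j\mapsto j$ otherwise; it induces $[0,1]^{I-\{i\}}\to[0,1]^I$ inserting the value $b$ at coordinate $i$. The face lattice $\mathbb{F}$ is the distributive lattice generated by $(i=0),(i=1)$ for names $i$ subject to $(i=0)\wedge(i=1)=0_\mathbb{F}$; $\mathbb{F}(I)$ is the sublattice generated by generators with $i\in I$. For $\psi\in\mathbb{F}(I)$ and $u\in[0,1]^I$, the truth value $\psi u$ is computed by interpreting $(i=0)$ as ''$u_i=0$'', $(i=1)$ as ''$u_i=1$'', $\wedge,\vee$ as conjunction/disjunction. $\psi(ib)\in\mathbb{F}(I-\{i\})$ is obtained by substituting $(i=b)\mapsto1_\mathbb{F}$, $(i=1-b)\mapsto 0_\mathbb{F}$. $\partial_I=\bigvee_{i\in I}((i=0)\vee(i=1))$, so $\partial_I u=1$ iff some $u_i\in\{0,1\}$. *)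

From Stdlib Require Import Reals List Sorted Arith.
Import ListNotations.
Open Scope R_scope.

(* Names are natural numbers. A finite set of names I is represented
   canonically by a strictly increasing list (so set equality = list equality). *)
Definition names_set (I : list nat) : Prop := StronglySorted lt I.

Definition remove_name (i : nat) (I : list nat) : list nat :=
  filter (fun j => negb (Nat.eqb j i)) I.

Inductive dm : Type :=
| dvar : nat -> dm
| dbot : dm
| dtop : dm
| dmeet : dm -> dm -> dm
| djoin : dm -> dm -> dm
| dneg : dm -> dm.

Inductive dm_eq : dm -> dm -> Prop :=
| dme_refl x : dm_eq x x
| dme_sym x y : dm_eq x y -> dm_eq y x
| dme_trans x y z : dm_eq x y -> dm_eq y z -> dm_eq x z
| dme_meet x x' y y' : dm_eq x x' -> dm_eq y y' -> dm_eq (dmeet x y) (dmeet x' y')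
| dme_join x x' y y' : dm_eq x x' -> dm_eq y y' -> dm_eq (djoin x y) (djoin x' y')
| dme_neg x x' : dm_eq x x' -> dm_eq (dneg x) (dneg x')
| dme_meetA x y z : dm_eq (dmeet x (dmeet y z)) (dmeet (dmeet x y) z)
| dme_joinA x y z : dm_eq (djoin x (djoin y z)) (djoin (djoin x y) z)
| dme_meetC x y : dm_eq (dmeet x y) (dmeet y x)
| dme_joinC x y : dm_eq (djoin x y) (djoin y x)
| dme_meetI x : dm_eq (dmeet x x) x
| dme_joinI x : dm_eq (djoin x x) x
| dme_absMJ x y : dm_eq (dmeet x (djoin x y)) x
| dme_absJM x y : dm_eq (djoin x (dmeet x y)) x
| dme_distr x y z : dm_eq (dmeet x (djoin y z)) (djoin (dmeet x y) (dmeet x z))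
| dme_meet1 x : dm_eq (dmeet x dtop) x
| dme_join0 x : dm_eq (djoin x dbot) x
| dme_negneg x : dm_eq (dneg (dneg x)) x
| dme_negmeet x y : dm_eq (dneg (dmeet x y)) (djoin (dneg x) (dneg y))
| dme_negjoin x y : dm_eq (dneg (djoin x y)) (dmeet (dneg x) (dneg y))
| dme_neg0 : dm_eq (dneg dbot) dtop
| dme_neg1 : dm_eq (dneg dtop) dbot.

Fixpoint dm_in (I : list nat) (t : dm) : Prop :=
  match t with
  | dvar i => In i I
  | dbot | dtop => True
  | dmeet a b | djoin a b => dm_in I a /\ dm_in I b
  | dneg a => dm_in I a
  end.

Fixpoint dm_eval (u : nat -> R) (t : dm) : R :=
  match t with
  | dvar i => u i
  | dbot => 0
  | dtop => 1
  | dmeet a b => Rmin (dm_eval u a) (dm_eval u b)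
  | djoin a b => Rmax (dm_eval u a) (dm_eval u b)
  | dneg a => 1 - dm_eval u a
  end.

(* f in Hom(I,J): a map J -> dM(I) (values outside J are irrelevant) *)
Definition is_hom (I J : list nat) (f : nat -> dm) : Prop :=
  forall j, In j J -> dm_in I (f j).

Definition is_strict (J : list nat) (f : nat -> dm) : Prop :=
  forall j, In j J -> ~ dm_eq (f j) dbot /\ ~ dm_eq (f j) dtop.

(* ---------- points of [0,1]^I x [0,1] ----------
   A point of [0,1]^I is represented by u : nat -> R with u_i in [0,1]
   for i in I and u_i = 0 for i not in I (canonical representative). *)
Definition pt : Type := ((nat -> R) * R)%type.

Definition in_cube (I : list nat) (u : nat -> R) : Prop :=
  (forall i, In i I -> 0 <= u i <= 1) /\ (forall i, ~ In i I -> u i = 0).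

Definition in_space (I : list nat) (p : pt) : Prop :=
  in_cube I (fst p) /\ 0 <= snd p <= 1.

Definition hom_map (J : list nat) (f : nat -> dm) (p : pt) : pt :=
  (fun j => if in_dec Nat.eq_dec j J then dm_eval (fst p) (f j) else 0, snd p).

Definition face_map (i : nat) (b : bool) (p : pt) : pt :=
  (fun j => if Nat.eqb j i then (if b then 1 else 0) else fst p j, snd p).

Definition boundary (I : list nat) (u : nat -> R) : Prop :=
  exists i, In i I /\ (u i = 0 \/ u i = 1).

Inductive face : Type :=
| feq0 : nat -> face
| feq1 : nat -> face
| fbot : face
| ftop : face
| fmeet : face -> face -> face
| fjoin : face -> face -> face.

Inductive face_eq : face -> face -> Prop :=
| fe_refl x : face_eq x x
| fe_sym x y : face_eq x y -> face_eq y x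
| fe_trans x y z : face_eq x y -> face_eq y z -> face_eq x z
| fe_meet x x' y y' : face_eq x x' -> face_eq y y' -> face_eq (fmeet x y) (fmeet x' y')
| fe_join x x' y y' : face_eq x x' -> face_eq y y' -> face_eq (fjoin x y) (fjoin x' y')
| fe_meetA x y z : face_eq (fmeet x (fmeet y z)) (fmeet (fmeet x y) z)
| fe_joinA x y z : face_eq (fjoin x (fjoin y z)) (fjoin (fjoin x y) z)
| fe_meetC x y : face_eq (fmeet x y) (fmeet y x)
| fe_joinC x y : face_eq (fjoin x y) (fjoin y x)
| fe_meetI x : face_eq (fmeet x x) x
| fe_joinI x : face_eq (fjoin x x) x
| fe_absMJ x y : face_eq (fmeet x (fjoin x y)) x
| fe_absJM x y : face_eq (fjoin x (fmeet x y)) x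
| fe_distr x y z : face_eq (fmeet x (fjoin y z)) (fjoin (fmeet x y) (fmeet x z))
| fe_meet1 x : face_eq (fmeet x ftop) x
| fe_join0 x : face_eq (fjoin x fbot) x
| fe_excl i : face_eq (fmeet (feq0 i) (feq1 i)) fbot.

Fixpoint face_in (I : list nat) (psi : face) : Prop :=
  match psi with
  | feq0 i | feq1 i => In i I
  | fbot | ftop => True
  | fmeet a b | fjoin a b => face_in I a /\ face_in I b
  end.

Fixpoint face_holds (psi : face) (u : nat -> R) : Prop :=
  match psi with
  | feq0 i => u i = 0
  | feq1 i => u i = 1
  | fbot => False
  | ftop => True
  | fmeet a b => face_holds a u /\ face_holds b u
  | fjoin a b => face_holds a u \/ face_holds b u
  end.

Fixpoint face_subst (i : nat) (b : bool) (psi : face) : face :=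
  match psi with
  | feq0 j => if Nat.eqb j i then (if b then fbot else ftop) else feq0 j
  | feq1 j => if Nat.eqb j i then (if b then ftop else fbot) else feq1 j
  | fbot => fbot
  | ftop => ftop
  | fmeet a b' => fmeet (face_subst i b a) (face_subst i b b')
  | fjoin a b' => fjoin (face_subst i b a) (face_subst i b b')
  end.

Definition good_r (r : list nat -> pt -> pt) : Prop :=
  (forall I p, names_set I -> in_space I p -> in_space I (r I p)) /\
  (forall I p, names_set I -> in_space I p -> r I (r I p) = r I p) /\
  (forall I p, names_set I -> in_space I p ->
     (r I p = p <-> boundary I (fst p) \/ snd p = 0)) /\
  (forall I J f p, names_set I -> names_set J -> is_hom I J f -> is_strict J f ->
     in_space I p -> r J (hom_map J f (r I p)) = r J (hom_map J f p)).

Definition psi_family (r : list nat -> pt -> pt) (rr : list nat -> face -> pt -> pt) : Prop :=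
  (forall I psi p, names_set I -> face_in I psi -> in_space I p ->
     in_space I (rr I psi p)) /\
  (* well defined on F(I), i.e. on equivalence classes of face terms *)
  (forall I psi psi' p, names_set I -> face_in I psi -> face_in I psi' ->
     face_eq psi psi' -> in_space I p -> rr I psi p = rr I psi' p) /\
  (forall I psi p, names_set I -> face_in I psi -> in_space I p ->
     face_eq psi ftop -> rr I psi p = p) /\
  (forall I psi p, names_set I -> face_in I psi -> in_space I p ->
     ~ face_eq psi ftop -> rr I psi p = rr I psi (r I p)) /\
  (forall I psi p, names_set I -> face_in I psi -> in_space I p ->
     snd p = 0 -> rr I psi p = p) /\
  (forall I psi i b p, names_set I -> face_in I psi -> In i I ->
     in_space (remove_name i I) p ->
     rr I psi (face_map i b p) =
     face_map i b (rr (remove_name i I) (face_subst i b psi) p)).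

(* Off [1_F], (b) replaces a point by its retraction r_I(u,z); unless z = 0,
   this point lies on the boundary, i.e. in the image of some face map (jc),
   and there (d) expresses r_psi through r_{psi(jc)} on the smaller cube.
   Hence r_psi is forced by recursion on |I|, which gives uniqueness; taking
   this recursion as a definition (with an arbitrary boundary coordinate)
   gives existence, (d) holding because face maps, and substitutions in F,
   at distinct names commute.  By the same recursion the image of r_psi lies
   in {psi u = 1 or z = 0}, and every such point is fixed, since psi <> 1_F
   can only hold on the boundary. *)
From Stdlib Require Import Reals List Sorted Arith Lra Lia.
From Stdlib Require Import FunctionalExtensionality ClassicalDescription.
Import ListNotations.
Open Scope R_scope.

Lemma length_ind (P : list nat -> Prop) :
  (forall I, (forall J, (length J < length I)%nat -> P J) -> P I) -> forall I, P I.
Proof. exact (well_founded_ind (Wf_nat.well_founded_ltof _ (@length nat)) P). Qed.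

Lemma In_remove_name k i I : In k (remove_name i I) <-> In k I /\ k <> i.
Proof.
  unfold remove_name; rewrite filter_In.
  destruct (Nat.eqb_spec k i); simpl; split; intros [H1 H2]; auto; congruence.
Qed.

Lemma remove_name_comm i j I :
  remove_name i (remove_name j I) = remove_name j (remove_name i I).
Proof.
  unfold remove_name; induction I as [|a I IH]; simpl; auto.
  destruct (Nat.eqb a j) eqn:E1; destruct (Nat.eqb a i) eqn:E2; simpl;
    rewrite ?E1, ?E2; simpl; rewrite IH; auto.
Qed.

Lemma remove_name_length i I : In i I -> (length (remove_name i I) < length I)%nat.
Proof.
  unfold remove_name; induction I as [|a I IH]; simpl; [tauto|].
  intros [<-|Hi].
  - rewrite Nat.eqb_refl; simpl.
    pose proof (filter_length_le (fun j => negb (Nat.eqb j a)) I); lia.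
  - specialize (IH Hi); destruct (negb (Nat.eqb a i)); simpl; lia.
Qed.

Lemma names_set_remove_name i I : names_set I -> names_set (remove_name i I).
Proof.
  unfold names_set; induction 1 as [|a I _ IH Ha]; simpl; [constructor|].
  destruct (negb (Nat.eqb a i)); auto.
  constructor; auto.
  rewrite Forall_forall in *; intros x Hx.
  apply Ha; unfold remove_name in Hx; apply filter_In in Hx; tauto.
Qed.

(** * Faces of the cube *)

Definition bval (b : bool) : R := if b then 1 else 0.

(* The inverse of [face_map j c] on its image: the coordinate [j] is reset to
   the value [0] that represents points of [[0,1]^(I-{j})]. *)
Definition face_proj (j : nat) (p : pt) : pt :=
  (fun k => if Nat.eqb k j then 0 else fst p k, snd p).

Lemma in_space_face_map i b I p :
  In i I -> in_space (remove_name i I) p -> in_space I (face_map i b p).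
Proof.
  intros Hi [[Hu Hout] Hz]; split; [split|]; simpl; auto.
  - intros k Hk; destruct (Nat.eqb_spec k i).
    + destruct b; lra.
    + apply Hu, In_remove_name; auto.
  - intros k Hk; destruct (Nat.eqb_spec k i).
    + subst; tauto.
    + apply Hout; rewrite In_remove_name; tauto.
Qed.

Lemma in_space_face_proj j I p : in_space I p -> in_space (remove_name j I) (face_proj j p).
Proof.
  intros [[Hu Hout] Hz]; split; [split|]; simpl; auto.
  - intros k Hk; apply In_remove_name in Hk.
    destruct (Nat.eqb_spec k j); [lra|]; apply Hu; tauto.
  - intros k Hk; destruct (Nat.eqb_spec k j); auto.
    apply Hout; intro; apply Hk, In_remove_name; auto.
Qed.

Lemma in_space_remove_name_at j I p : in_space (remove_name j I) p -> fst p j = 0.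
Proof. intros [[_ Hout] _]; apply Hout; rewrite In_remove_name; tauto. Qed.

Lemma face_proj_face_map j c p : fst p j = 0 -> face_proj j (face_map j c p) = p.
Proof.
  destruct p as [u z]; simpl; intros Hj; unfold face_proj, face_map; simpl.
  f_equal; extensionality k; destruct (Nat.eqb_spec k j); subst; auto.
Qed.

Lemma face_map_face_proj j c p : fst p j = bval c -> face_map j c (face_proj j p) = p.
Proof.
  destruct p as [u z]; simpl; intros Hj; unfold face_proj, face_map; simpl.
  f_equal; extensionality k; destruct (Nat.eqb_spec k j); subst; auto.
Qed.

Lemma face_map_comm i b j c p : i <> j ->
  face_map i b (face_map j c p) = face_map j c (face_map i b p).
Proof.
  intros Hij; unfold face_map; simpl; f_equal; extensionality k.
  destruct (Nat.eqb_spec k i), (Nat.eqb_spec k j); subst; auto; tauto.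
Qed.

Lemma face_proj_face_map_comm i b j p : i <> j ->
  face_proj j (face_map i b p) = face_map i b (face_proj j p).
Proof.
  intros Hij; unfold face_map, face_proj; simpl; f_equal; extensionality k.
  destruct (Nat.eqb_spec k i), (Nat.eqb_spec k j); subst; auto; tauto.
Qed.

Lemma face_map_at i b p : fst (face_map i b p) i = bval b.
Proof. simpl; rewrite Nat.eqb_refl; reflexivity. Qed.

Lemma boundary_face_map i b I p : In i I -> boundary I (fst (face_map i b p)).
Proof. exists i; rewrite face_map_at; destruct b; simpl; auto. Qed.

Lemma boundary_bval I u : boundary I u -> exists j c, In j I /\ u j = bval c.
Proof. intros [j [Hj [H0|H1]]]; [exists j, false | exists j, true]; auto. Qed.

Fixpoint find_boundary (I : list nat) (u : nat -> R) : option (nat * bool) :=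
  match I with
  | [] => None
  | i :: I' => if Req_EM_T (u i) 0 then Some (i, false)
               else if Req_EM_T (u i) 1 then Some (i, true)
               else find_boundary I' u
  end.

Lemma find_boundary_some I u j c :
  find_boundary I u = Some (j, c) -> In j I /\ u j = bval c.
Proof.
  induction I as [|i I IH]; simpl; [discriminate|].
  destruct (Req_EM_T (u i) 0); [intros [= <- <-]; simpl; auto|].
  destruct (Req_EM_T (u i) 1); [intros [= <- <-]; simpl; auto|].
  intros H; destruct (IH H); auto.
Qed.

Lemma find_boundary_none I u : find_boundary I u = None -> ~ boundary I u.
Proof.
  induction I as [|i I IH]; simpl; [intros _ [k [[] _]]|].
  destruct (Req_EM_T (u i) 0); [discriminate|].
  destruct (Req_EM_T (u i) 1); [discriminate|].
  intros H [k [[<-|Hk] Hv]]; [tauto|].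
  apply (IH H); exists k; auto.
Qed.

(** * The face lattice *)

Lemma face_eq_join_top x : face_eq (fjoin ftop x) ftop.
Proof.
  eapply fe_trans; [|apply (fe_absJM ftop x)].
  apply fe_join; [apply fe_refl|].
  eapply fe_trans; [apply fe_sym, fe_meet1|apply fe_meetC].
Qed.

Lemma face_eq_meet_bot x : face_eq (fmeet fbot x) fbot.
Proof.
  eapply fe_trans; [|apply (fe_absMJ fbot x)].
  apply fe_meet; [apply fe_refl|].
  eapply fe_trans; [apply fe_sym, fe_join0|apply fe_joinC].
Qed.

Lemma face_eq_subst i b x y : face_eq x y -> face_eq (face_subst i b x) (face_subst i b y).
Proof.
  induction 1; simpl; try (econstructor; eauto; fail).
  destruct (Nat.eqb i0 i); [|apply fe_excl].
  destruct b; [apply face_eq_meet_bot|].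
  eapply fe_trans; [apply fe_meetC|apply face_eq_meet_bot].
Qed.

Lemma face_holds_eq x y u : face_eq x y -> (face_holds x u <-> face_holds y u).
Proof. induction 1; simpl; try tauto; split; [intros [H0 H1]; lra|tauto]. Qed.

Lemma face_holds_subst i b psi p :
  face_holds (face_subst i b psi) (fst p) <-> face_holds psi (fst (face_map i b p)).
Proof.
  induction psi; simpl; try tauto;
    destruct (Nat.eqb n i); simpl; try tauto; destruct b; simpl; split; auto; lra.
Qed.

Lemma face_in_subst I i b psi :
  face_in I psi -> face_in (remove_name i I) (face_subst i b psi).
Proof.
  induction psi; simpl; try tauto;
    destruct (Nat.eqb_spec n i); try (destruct b; simpl; auto; fail);
    intros; apply In_remove_name; auto.
Qed.

Lemma face_subst_comm i b j c psi : i <> j ->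
  face_subst i b (face_subst j c psi) = face_subst j c (face_subst i b psi).
Proof.
  intros Hij; induction psi; simpl; try congruence;
    destruct (Nat.eqb_spec n j), (Nat.eqb_spec n i); subst; try tauto;
    simpl; rewrite ?Nat.eqb_refl;
    repeat match goal with H : ?a <> ?b |- _ => apply Nat.eqb_neq in H; rewrite ?H end;
    destruct b, c; simpl; auto.
Qed.

Lemma face_eq_top_of_interior I psi u :
  face_in I psi -> ~ boundary I u -> face_holds psi u -> face_eq psi ftop.
Proof.
  intros Hin Hu; induction psi; simpl in *.
  1, 2: intros H; exfalso; apply Hu; exists n; auto.
  - tauto.
  - intros _; apply fe_refl.
  - intros [H1 H2]; eapply fe_trans; [|apply fe_meetI].
    apply fe_meet; [apply IHpsi1 | apply IHpsi2]; tauto.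
  - intros [H|H].
    + eapply fe_trans; [apply fe_join; [apply IHpsi1; tauto|apply fe_refl]|].
      apply face_eq_join_top.
    + eapply fe_trans; [apply fe_joinC|].
      eapply fe_trans; [apply fe_join; [apply IHpsi2; tauto|apply fe_refl]|].
      apply face_eq_join_top.
Qed.

(** * Families of retractions *)

Section Retraction.
Context {r : list nat -> pt -> pt} (Hr : good_r r).

Lemma r_in_space I p : names_set I -> in_space I p -> in_space I (r I p).
Proof. destruct Hr as [H _]; auto. Qed.

Lemma r_idem I p : names_set I -> in_space I p -> r I (r I p) = r I p.
Proof. destruct Hr as [_ [H _]]; auto. Qed.

Lemma r_fixed I p : names_set I -> in_space I p ->
  (r I p = p <-> boundary I (fst p) \/ snd p = 0).
Proof. destruct Hr as [_ [_ [H _]]]; auto. Qed.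

Lemma r_boundary I p : names_set I -> in_space I p ->
  snd (r I p) <> 0 -> boundary I (fst (r I p)).
Proof.
  intros HI Hp Hz.
  destruct (proj1 (r_fixed I (r I p) HI (r_in_space I p HI Hp)) (r_idem I p HI Hp));
    tauto.
Qed.

End Retraction.

Section PsiFamily.
Context {r : list nat -> pt -> pt} {rr : list nat -> face -> pt -> pt}.
Context (Hr : good_r r) (Hrr : psi_family r rr).

Lemma psi_family_in_space I psi p : names_set I -> face_in I psi -> in_space I p ->
  in_space I (rr I psi p).
Proof. destruct Hrr as [H _]; auto. Qed.

Lemma psi_family_top I psi p : names_set I -> face_in I psi -> in_space I p ->
  face_eq psi ftop -> rr I psi p = p.
Proof. destruct Hrr as [_ [_ [H _]]]; auto. Qed.

Lemma psi_family_retract I psi p : names_set I -> face_in I psi -> in_space I p ->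
  ~ face_eq psi ftop -> rr I psi p = rr I psi (r I p).
Proof. destruct Hrr as [_ [_ [_ [H _]]]]; auto. Qed.

Lemma psi_family_zero I psi p : names_set I -> face_in I psi -> in_space I p ->
  snd p = 0 -> rr I psi p = p.
Proof. destruct Hrr as [_ [_ [_ [_ [H _]]]]]; auto. Qed.

Lemma psi_family_at_face I psi j c q : names_set I -> face_in I psi -> In j I ->
  in_space I q -> fst q j = bval c ->
  rr I psi q = face_map j c (rr (remove_name j I) (face_subst j c psi) (face_proj j q)).
Proof.
  intros HI Hpsi Hj Hq Hv; destruct Hrr as [_ [_ [_ [_ [_ Hd]]]]].
  rewrite <- Hd by auto using in_space_face_proj.
  rewrite face_map_face_proj; auto.
Qed.

Lemma psi_family_holds I psi p : names_set I -> face_in I psi -> in_space I p ->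
  face_holds psi (fst (rr I psi p)) \/ snd (rr I psi p) = 0.
Proof.
  revert psi p.
  induction I as [I IH] using length_ind.
  intros psi p HI Hpsi Hp.
  destruct (classic (face_eq psi ftop)) as [Htop|Hntop].
  { left; rewrite psi_family_top by auto.
    apply (face_holds_eq _ _ _ Htop); exact Logic.I. }
  rewrite psi_family_retract by auto.
  assert (Hq : in_space I (r I p)) by (apply r_in_space; auto).
  destruct (Req_EM_T (snd (r I p)) 0) as [Hz|Hz].
  { right; rewrite psi_family_zero; auto. }
  destruct (boundary_bval _ _ (r_boundary Hr I p HI Hp Hz)) as [j [c [Hj Hv]]].
  rewrite (psi_family_at_face _ _ j c) by auto.
  destruct (IH (remove_name j I)) with (psi := face_subst j c psi) (p := face_proj j (r I p))
    as [Hh|Hh]; auto using remove_name_length, names_set_remove_name, face_in_subst,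
    in_space_face_proj.
  left; apply face_holds_subst; exact Hh.
Qed.

Lemma psi_family_fixed_of_holds I psi p : names_set I -> face_in I psi -> in_space I p ->
  face_holds psi (fst p) \/ snd p = 0 -> rr I psi p = p.
Proof.
  revert psi p.
  induction I as [I IH] using length_ind.
  intros psi p HI Hpsi Hp [Hh|Hz]; [|apply psi_family_zero; auto].
  destruct (classic (face_eq psi ftop)) as [Htop|Hntop]; [apply psi_family_top; auto|].
  assert (Hbd : boundary I (fst p)).
  { apply NNPP; intro Hint; apply Hntop; eapply face_eq_top_of_interior; eauto. }
  destruct (boundary_bval _ _ Hbd) as [j [c [Hj Hv]]].
  rewrite (psi_family_at_face _ _ j c), IH by
    (auto using remove_name_length, names_set_remove_name, face_in_subst,
       in_space_face_proj;
     left; apply face_holds_subst; rewrite face_map_face_proj; auto).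
  apply face_map_face_proj; auto.
Qed.

Lemma psi_family_idem I psi p : names_set I -> face_in I psi -> in_space I p ->
  rr I psi (rr I psi p) = rr I psi p.
Proof.
  intros HI Hpsi Hp.
  apply psi_family_fixed_of_holds; auto using psi_family_in_space, psi_family_holds.
Qed.

Lemma psi_family_fixed I psi p : names_set I -> face_in I psi -> in_space I p ->
  (rr I psi p = p <-> face_holds psi (fst p) \/ snd p = 0).
Proof.
  intros HI Hpsi Hp; split.
  - intros E; rewrite <- E; apply psi_family_holds; auto.
  - apply psi_family_fixed_of_holds; auto.
Qed.

End PsiFamily.

Lemma psi_family_unique r rr1 rr2 : good_r r -> psi_family r rr1 -> psi_family r rr2 ->
  forall I psi p, names_set I -> face_in I psi -> in_space I p -> rr1 I psi p = rr2 I psi p.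
Proof.
  intros Hr H1 H2 I.
  induction I as [I IH] using length_ind.
  intros psi p HI Hpsi Hp.
  destruct (classic (face_eq psi ftop)) as [Htop|Hntop].
  { rewrite (psi_family_top H1), (psi_family_top H2); auto. }
  rewrite (psi_family_retract H1), (psi_family_retract H2) by auto.
  assert (Hq : in_space I (r I p)) by (apply (r_in_space Hr); auto).
  destruct (Req_EM_T (snd (r I p)) 0) as [Hz|Hz].
  { rewrite (psi_family_zero H1), (psi_family_zero H2); auto. }
  destruct (boundary_bval _ _ (r_boundary Hr I p HI Hp Hz)) as [j [c [Hj Hv]]].
  rewrite (psi_family_at_face H1 _ _ j c), (psi_family_at_face H2 _ _ j c), IH by
    auto using remove_name_length, names_set_remove_name, face_in_subst, in_space_face_proj.
  reflexivity.
Qed.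

(** * Construction of the family *)

Section Construction.
Variable r : list nat -> pt -> pt.

Definition rpsi_step (rec : list nat -> face -> pt -> pt) (I : list nat) (psi : face)
    (p : pt) : pt :=
  if excluded_middle_informative (face_eq psi ftop) then p else
  let q := r I p in
  if Req_EM_T (snd q) 0 then q else
  match find_boundary I (fst q) with
  | Some (j, c) => face_map j c (rec (remove_name j I) (face_subst j c psi) (face_proj j q))
  | None => q
  end.

Fixpoint rpsi_iter (n : nat) : list nat -> face -> pt -> pt :=
  match n with
  | O => fun _ _ p => p
  | S n => rpsi_step (rpsi_iter n)
  end.

(* Each recursive call removes a name, so [S (length I)] iterations suffice. *)
Definition rpsi (I : list nat) (psi : face) (p : pt) : pt :=
  rpsi_iter (S (length I)) I psi p.

Lemma rpsi_step_ext rec1 rec2 I psi p :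
  (forall j psi' p', In j I ->
     rec1 (remove_name j I) psi' p' = rec2 (remove_name j I) psi' p') ->
  rpsi_step rec1 I psi p = rpsi_step rec2 I psi p.
Proof.
  intros Hrec; unfold rpsi_step.
  destruct (excluded_middle_informative (face_eq psi ftop)); auto.
  destruct (Req_EM_T (snd (r I p)) 0); auto.
  destruct (find_boundary I (fst (r I p))) as [[j c]|] eqn:F; auto.
  rewrite Hrec; auto; apply (find_boundary_some _ _ _ _ F).
Qed.

Lemma rpsi_iter_stable n m I psi p : (length I < n)%nat -> (length I < m)%nat ->
  rpsi_iter n I psi p = rpsi_iter m I psi p.
Proof.
  revert m I psi p; induction n as [|n IH]; intros [|m] I psi p Hn Hm; try lia.
  apply rpsi_step_ext; intros j psi' p' Hj.
  pose proof (remove_name_length j I Hj); apply IH; lia.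
Qed.

Lemma rpsi_unfold I psi p : rpsi I psi p = rpsi_step rpsi I psi p.
Proof.
  unfold rpsi at 1; cbn [rpsi_iter].
  apply rpsi_step_ext; intros j psi' p' Hj.
  pose proof (remove_name_length j I Hj); apply rpsi_iter_stable; lia.
Qed.

Lemma rpsi_wd I psi psi' p : face_eq psi psi' -> rpsi I psi p = rpsi I psi' p.
Proof.
  revert psi psi' p.
  induction I as [I IH] using length_ind.
  intros psi psi' p He; rewrite !rpsi_unfold; unfold rpsi_step.
  destruct (excluded_middle_informative (face_eq psi ftop)) as [h1|h1],
    (excluded_middle_informative (face_eq psi' ftop)) as [h2|h2]; auto.
  - exfalso; apply h2; eapply fe_trans; [apply fe_sym, He|auto].
  - exfalso; apply h1; eapply fe_trans; [apply He|auto].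
  - destruct (Req_EM_T (snd (r I p)) 0); auto.
    destruct (find_boundary I (fst (r I p))) as [[j c]|] eqn:F; auto.
    apply find_boundary_some in F.
    f_equal; apply IH; [apply remove_name_length; tauto|apply face_eq_subst; auto].
Qed.

Lemma rpsi_top I psi p : face_eq psi ftop -> rpsi I psi p = p.
Proof.
  intros H; rewrite rpsi_unfold; unfold rpsi_step.
  destruct (excluded_middle_informative (face_eq psi ftop)); tauto.
Qed.

Hypothesis Hr : good_r r.

Lemma rpsi_retract I psi p : names_set I -> in_space I p -> ~ face_eq psi ftop ->
  rpsi I psi p = rpsi I psi (r I p).
Proof.
  intros HI Hp H; rewrite !rpsi_unfold; unfold rpsi_step.
  rewrite (r_idem Hr) by auto.
  destruct (excluded_middle_informative (face_eq psi ftop)); tauto.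
Qed.

Lemma rpsi_cases I psi p : names_set I -> in_space I p -> ~ face_eq psi ftop ->
  (snd (r I p) = 0 /\ rpsi I psi p = r I p) \/
  (snd (r I p) <> 0 /\ exists j c, In j I /\ fst (r I p) j = bval c /\
     rpsi I psi p =
     face_map j c (rpsi (remove_name j I) (face_subst j c psi) (face_proj j (r I p)))).
Proof.
  intros HI Hp H; rewrite rpsi_unfold; unfold rpsi_step.
  destruct (excluded_middle_informative (face_eq psi ftop)); [tauto|]; cbv zeta.
  destruct (Req_EM_T (snd (r I p)) 0) as [Hz|Hz]; [tauto|right; split; auto].
  destruct (find_boundary I (fst (r I p))) as [[j c]|] eqn:F.
  - destruct (find_boundary_some _ _ _ _ F); eauto.
  - exfalso; exact (find_boundary_none _ _ F (r_boundary Hr I p HI Hp Hz)).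
Qed.

Lemma rpsi_zero I psi p : names_set I -> in_space I p -> snd p = 0 -> rpsi I psi p = p.
Proof.
  intros HI Hp Hz.
  assert (Hfix : r I p = p) by (apply (r_fixed Hr); auto).
  destruct (classic (face_eq psi ftop)) as [Htop|Hntop]; [apply rpsi_top; auto|].
  destruct (rpsi_cases I psi p) as [[_ ->]|[Hz' _]]; auto.
  rewrite Hfix in Hz'; contradiction.
Qed.

Lemma rpsi_in_space I psi p : names_set I -> in_space I p -> in_space I (rpsi I psi p).
Proof.
  revert psi p.
  induction I as [I IH] using length_ind.
  intros psi p HI Hp.
  destruct (classic (face_eq psi ftop)) as [Htop|Hntop]; [rewrite rpsi_top; auto|].
  destruct (rpsi_cases I psi p) as [[_ ->]|[_ [j [c [Hj [_ ->]]]]]]; auto.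
  - apply (r_in_space Hr); auto.
  - apply in_space_face_map; auto; apply IH;
      auto using remove_name_length, names_set_remove_name, in_space_face_proj, r_in_space.
Qed.

Lemma rpsi_face I psi i b p : names_set I -> In i I -> in_space (remove_name i I) p ->
  rpsi I psi (face_map i b p) = face_map i b (rpsi (remove_name i I) (face_subst i b psi) p).
Proof.
  revert psi i b p.
  induction I as [I IH] using length_ind.
  intros psi i b p HI Hi Hp.
  destruct (classic (face_eq psi ftop)) as [Htop|Hntop].
  { rewrite !rpsi_top; auto; apply (face_eq_subst i b) in Htop; exact Htop. }
  assert (Hq : in_space I (face_map i b p)) by (apply in_space_face_map; auto).
  assert (Hfix : r I (face_map i b p) = face_map i b p).
  { apply (r_fixed Hr); auto; left; apply boundary_face_map; auto. }
  assert (Hp0 : fst p i = 0) by (eapply in_space_remove_name_at; eauto).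
  destruct (rpsi_cases I psi (face_map i b p)) as [[Hz E]|[_ [j [c [Hj [Hv E]]]]]]; auto;
    rewrite Hfix in *; rewrite E.
  { rewrite rpsi_zero; auto using names_set_remove_name. }
  destruct (Nat.eq_dec j i) as [->|Hji].
  { rewrite face_map_at in Hv.
    replace c with b by (destruct b, c; simpl in Hv; auto; lra).
    rewrite face_proj_face_map; auto. }
  (* Both sides descend to the codimension-2 face {i = b, j = c}. *)
  assert (Hpj : fst p j = bval c).
  { rewrite <- Hv; simpl; apply Nat.eqb_neq in Hji; rewrite Hji; auto. }
  assert (Hij : In i (remove_name j I)) by (apply In_remove_name; auto).
  assert (Hji' : In j (remove_name i I)) by (apply In_remove_name; auto).
  rewrite face_proj_face_map_comm, IH by
    (auto using remove_name_length, names_set_remove_name;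
     rewrite remove_name_comm; apply in_space_face_proj; auto).
  rewrite <- (face_map_face_proj j c p) at 2 by auto.
  rewrite (IH (remove_name i I)) by
    auto using remove_name_length, names_set_remove_name, in_space_face_proj.
  rewrite face_map_comm, remove_name_comm, face_subst_comm by auto.
  reflexivity.
Qed.

Lemma psi_family_rpsi : psi_family r rpsi.
Proof.
  split; [|split; [|split; [|split; [|split]]]]; intros.
  - apply rpsi_in_space; auto.
  - apply rpsi_wd; auto.
  - apply rpsi_top; auto.
  - apply rpsi_retract; auto.
  - apply rpsi_zero; auto.
  - apply rpsi_face; auto.
Qed.

End Construction.

Theorem mainTheorem5 (r : list nat -> pt -> pt) (Hr : good_r r) :
  exists rr : list nat -> face -> pt -> pt,
    psi_family r rr /\
    (forall rr', psi_family r rr' ->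
       forall I psi p, names_set I -> face_in I psi -> in_space I p ->
         rr' I psi p = rr I psi p) /\
    (forall I psi p, names_set I -> face_in I psi -> in_space I p ->
       rr I psi (rr I psi p) = rr I psi p) /\
    (forall I psi p, names_set I -> face_in I psi -> in_space I p ->
       (rr I psi p = p <-> face_holds psi (fst p) \/ snd p = 0)).
Proof.
  pose proof (psi_family_rpsi r Hr) as Hfam.
  exists (rpsi r); split; [exact Hfam|split; [|split]].
  - intros rr' Hfam'; apply (psi_family_unique r); auto.
  - apply (psi_family_idem Hr Hfam).
  - apply (psi_family_fixed Hr Hfam).
Qed.
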